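(* Let $\mathcal P$ be a pyramid. If there exists $r>0$ such that $$\inf_{X\in\mathcal P}\sup_{x\in X}\mu_X(B_r(x))=0,$$ then there is no mm-space $X$ with $\mathcal P=\mathcal P_X$.
   Context: An mm-space is a triple $(X,d_X,\mu_X)$ with $(X,d_X)$ complete separable metric and $\mu_X$ a Borel probability measure; $\mathcal X$ is the set of mm-isomorphism classes. $Y\prec X$ means there is a 1-Lipschitz $f:X\to Y$ with $f_*\mu_X=\mu_Y$. The box distance $\square(X,Y)$ is the infimum of $\max\{\operatorname{dis}(S),1-\pi(S)\}$ over couplings $\pi$ of $\mu_X,\mu_Y$ and Borel $S\subset X\times Y$, $\operatorname{dis}(S)=\sup\{|d_X(x,x')-d_Y(y,y')|:(x,y),(x',y')\in S\}$. A pyramid is a nonempty box-closed subset of $\mathcal X$ closed downward under $\prec$ and directed; $\mathcal P_X=\{Y\in\mathcal X:Y\prec X\}$. $B_r(x)$ denotes the closed ball of radius $r$ about $x$. *)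

From HB Require Import structures.
From mathcomp Require Import all_boot all_order all_algebra.
From mathcomp Require Import all_classical all_reals all_analysis.
Set Implicit Arguments. Unset Strict Implicit. Unset Printing Implicit Defensive.
Import Order.TTheory GRing.Theory Num.Theory.
Local Open Scope classical_set_scope.
Local Open Scope ring_scope.

Section MM.
Variable R : realType.

Definition d_open (T : Type) (d : T -> T -> R) (A : set T) : Prop :=
  forall x, A x -> exists2 e : R, 0 < e & [set y | d x y < e] `<=` A.

Definition is_metric (T : Type) (d : T -> T -> R) : Prop :=
  [/\ forall x y, 0 <= d x y,
      forall x y, d x y = 0 <-> x = y,
      forall x y, d x y = d y x &
      forall x y z, d x z <= d x y + d y z].

Definition complete_metric (T : Type) (d : T -> T -> R) : Prop :=
  forall u : nat -> T,
    (forall e : R, 0 < e -> exists N, forall m n, (N <= m)%N -> (N <= n)%N -> d (u m) (u n) < e) ->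
    exists l, forall e : R, 0 < e -> exists N, forall n, (N <= n)%N -> d (u n) l < e.

Definition separable_metric (T : Type) (d : T -> T -> R) : Prop :=
  exists s : nat -> T, forall x (e : R), 0 < e -> exists n, d x (s n) < e.

Record mmspace := MMSpace {
  mm_disp : measure_display;
  mm_T : measurableType mm_disp;
  mm_d : mm_T -> mm_T -> R;
  mm_mu : probability mm_T R;
  mm_metric : is_metric mm_d;
  mm_complete : complete_metric mm_d;
  mm_separable : separable_metric mm_d;
  mm_borel : forall A : set mm_T, measurable A <-> <<s d_open mm_d >> A
}.

Definition cball (X : mmspace) (x : mm_T X) (r : R) : set (mm_T X) :=
  [set y | mm_d x y <= r].

Definition dominated (Y X : mmspace) : Prop :=
  exists f : mm_T X -> mm_T Y,
    (forall x x', mm_d (f x) (f x') <= mm_d x x') /\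
    (forall B : set (mm_T Y), measurable B ->
        mm_mu Y B = mm_mu X (f @^-1` B)).

Definition coupling (X Y : mmspace) (pi : probability (mm_T X * mm_T Y)%type R) : Prop :=
  (forall A : set (mm_T X), measurable A -> pi (A `*` setT) = mm_mu X A) /\
  (forall B : set (mm_T Y), measurable B -> pi (setT `*` B) = mm_mu Y B).

Definition dis (X Y : mmspace) (S : set (mm_T X * mm_T Y)) : \bar R :=
  ereal_sup [set (`| mm_d pq.1.1 pq.2.1 - mm_d pq.1.2 pq.2.2 |)%:E
            | pq in [set pq : (mm_T X * mm_T Y) * (mm_T X * mm_T Y) | S pq.1 /\ S pq.2] ].

Definition box (X Y : mmspace) : \bar R :=
  ereal_inf [set Order.max (dis S) (1%:E - pi S)%E
            | pi in [set pi : probability (mm_T X * mm_T Y)%type R | coupling pi]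
            & S in [set S : set (mm_T X * mm_T Y) | measurable S]].

(** Pyramids (as predicates on mm-spaces; downward closure under ≺ makes
    them invariant under mm-isomorphism, i.e. sets of isomorphism classes). *)
Definition box_closed (P : mmspace -> Prop) : Prop :=
  forall X, (forall e : R, 0 < e -> exists2 Y, P Y & (box Y X < e%:E)%E) -> P X.

Definition pyramid (P : mmspace -> Prop) : Prop :=
  [/\ exists X, P X,
      box_closed P,
      (forall X Y, P X -> dominated Y X -> P Y) &
      (forall X Y, P X -> P Y -> exists2 Z, P Z & dominated X Z /\ dominated Y Z)].

Definition pyramid_of (X : mmspace) : mmspace -> Prop := fun Y => dominated Y X.

End MM.

From mathcomp Require Import all_boot all_order all_algebra.
From mathcomp Require Import all_classical all_reals all_analysis.
From mathcomp Require Import lra.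
Set Implicit Arguments. Unset Strict Implicit. Unset Printing Implicit Defensive.
Import Order.TTheory GRing.Theory Num.Theory.
Local Open Scope classical_set_scope.
Local Open Scope ring_scope.

(* If P = P_X, every Y in P is the image of X under a 1-Lipschitz map f
   pushing mu_X forward to mu_Y, and f^-1(B_r(f x)) contains B_r(x); so
   sup_y mu_Y(B_r(y)) >= mu_X(B_r(x)) for all Y in P and all x.  By
   separability countably many r-balls cover X, so one of them has positive
   mu_X-measure, which bounds the infimum away from 0. *)

Section MMSpaceBalls.
Variables (R : realType) (X : mmspace R).

Lemma mm_dC (x y : mm_T X) : mm_d x y = mm_d y x.
Proof. by have [_ _ dC _] := mm_metric X. Qed.

Lemma mm_d_lipschitz (y a b : mm_T X) : mm_d y a - mm_d y b <= mm_d a b.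
Proof.
have [_ _ _ dtri] := mm_metric X.
by have := dtri y b a; rewrite (mm_dC b a); lra.
Qed.

Lemma measurable_lipschitz_sublevel (h : mm_T X -> R) (r : R) :
  (forall x y, h x - h y <= mm_d x y) -> measurable [set x | h x <= r].
Proof.
move=> h_lip.
have open_gt : d_open (@mm_d R X) (~` [set x | h x <= r]).
  move=> x /= /negP; rewrite -ltNge => hx.
  exists (h x - r); first by rewrite subr_gt0.
  move=> y /= dxy; apply/negP; rewrite -ltNge.
  by have := h_lip x y; lra.
have : measurable (~` [set x | h x <= r]).
  by apply/(proj2 (mm_borel _)); apply: sub_sigma_algebra.
by move/measurableC; rewrite setCK.
Qed.

Lemma measurable_cball (y : mm_T X) (r : R) : measurable (cball y r).
Proof. exact/measurable_lipschitz_sublevel/mm_d_lipschitz. Qed.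

Lemma exists_cball_gt0 (r : R) :
  0 < r -> exists x : mm_T X, (0 < mm_mu X (cball x r))%E.
Proof.
move=> r_gt0; have [s s_dense] := mm_separable X.
apply: contrapT => no_pos.
have null_ball n : mm_mu X (cball (s n) r) = 0%E.
  apply/eqP; rewrite eq_le measure_ge0 andbT leNgt; apply/negP => pos.
  by apply: no_pos; exists (s n).
have [N [mN N0 coverN]] : (mm_mu X).-negligible (\bigcup_n cball (s n) r).
  apply: negligible_bigcup => n.
  by exists (cball (s n) r); split; [exact: measurable_cball | exact: null_ball |].
have : (mm_mu X [set: mm_T X] <= mm_mu X N)%E.
  apply: le_measure; rewrite ?inE // => x _; apply: coverN.
  have [n dxn] := s_dense x r r_gt0; exists n => //.
  by rewrite /cball /= mm_dC ltW.
by rewrite probability_setT N0 lee_fin ler10.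
Qed.

End MMSpaceBalls.

Lemma dominated_cball_le (R : realType) (X Y : mmspace R) (r : R) :
  dominated Y X -> forall x : mm_T X,
  (mm_mu X (cball x r) <= ereal_sup [set mm_mu Y (cball y r) | y in [set: mm_T Y]])%E.
Proof.
move=> [f [f_lip f_push]] x.
apply: (@le_trans _ _ (mm_mu Y (cball (f x) r))); last first.
  by apply: ereal_sup_ubound; exists (f x).
rewrite f_push; last exact: measurable_cball.
apply: le_measure; rewrite ?inE.
- exact: measurable_cball.
- apply: (@measurable_lipschitz_sublevel R X (fun z => mm_d (f x) (f z))) => a b.
  exact: le_trans (mm_d_lipschitz _ _ _) (f_lip a b).
- by move=> z; rewrite /cball /=; apply: le_trans; apply: f_lip.
Qed.

Theorem proposition6p8 (R : realType) (P : mmspace R -> Prop) :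
  pyramid P ->
  (exists2 r : R, 0 < r &
     ereal_inf [set v : \bar R | exists2 X : mmspace R, P X &
                  v = ereal_sup [set mm_mu X (cball x r) | x in [set: mm_T X]]]
       = 0%E) ->
  ~ exists X : mmspace R, forall Y : mmspace R, P Y <-> pyramid_of X Y.
Proof.
move=> _ [r r_gt0 inf0] [X PE].
have [x0 ball_pos] := @exists_cball_gt0 _ X _ r_gt0.
suff : (mm_mu X (cball x0 r) <= 0)%E by rewrite leNgt ball_pos.
rewrite -inf0; apply/ereal_infP => _ [Y /PE XdomY ->].
exact: dominated_cball_le.
Qed.
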